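(* Let $X$ be a well-ordered set, $S\subseteq GDNP(X)$, and suppose the GDN-Poisson algebra $GDNP(X|S)=GDNP(X)/Id(S)$ satisfies the identity $x\circ(y\cdot z)=(x\circ y)\cdot z+(x\circ z)\cdot y$. Let $\theta:DGDNP(X)\to k\{X\}$ be the GDN-Poisson algebra homomorphism induced by $\theta(a)=a$, $a\in X$ (with $S$ mapped to $DGDNP(X)$ via the canonical projection). Then $GDNP(X|S)$ is isomorphic to $k\{X|\theta(S)\}$ both as GDN-Poisson algebras (with $f\circ g=fDg$ on $k\{X|\theta(S)\}$) and as commutative associative differential algebras (with derivation $f\mapsto e\circ f$ on $GDNP(X|S)$).
   Context: A GDN-Poisson algebra is a vector space with bilinear products $\cdot,\circ$ such that $(\cdot)$ is commutative associative with unit $e$, $x\circ(y\circ z)-(x\circ y)\circ z=y\circ(x\circ z)-(y\circ x)\circ z$, $(x\circ y)\circ z=(x\circ z)\circ y$, $(x\cdot y)\circ z=x\cdot(y\circ z)$, $(x\circ y)\cdot z-x\circ(y\cdot z)=(y\circ x)\cdot z-y\circ(x\cdot z)$. $GDNP(X)$ is the free GDN-Poisson algebra on $X$ and $Id(S)$ its ideal generated by $S$. $DGDNP(X)=GDNP(X)/Id(\lozenge)$ is the free GDN-Poisson algebra satisfying $x\circ(y\cdot z)=(x\circ y)\cdot z+(x\circ z)\cdot y$. $k\{X\}$ is the free commutative associative differential algebra over the field $k$ on $X$, with unit $e$ and one derivation $D$ ($De=0$); for $R\subseteq k\{X\}$, $k\{X|R\}$ is the quotient of $k\{X\}$ by the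 differential ideal generated by $R$. *)

From HB Require Import structures.
From mathcomp Require Import all_boot all_order all_algebra.
Set Implicit Arguments. Unset Strict Implicit. Unset Printing Implicit Defensive.
Import GRing.Theory.
Local Open Scope ring_scope.

Definition is_well_order (X : Type) (lt : X -> X -> Prop) : Prop :=
  (forall x, ~ lt x x) /\
  (forall x y z, lt x y -> lt y z -> lt x z) /\
  (forall x y, lt x y \/ x = y \/ lt y x) /\
  well_founded lt.

Record GDNPAlg (k : fieldType) := {
  gcar :> lmodType k;
  gmul : gcar -> gcar -> gcar;
  gone : gcar;
  gcirc : gcar -> gcar -> gcar;
  gmul_linl : forall (a : k) x y z, gmul (a *: x + y) z = a *: gmul x z + gmul y z;
  gmul_linr : forall (a : k) x y z, gmul z (a *: x + y) = a *: gmul z x + gmul z y;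
  gmulC : forall x y, gmul x y = gmul y x;
  gmulA : forall x y z, gmul x (gmul y z) = gmul (gmul x y) z;
  gmul1 : forall x, gmul gone x = x;
  gcirc_linl : forall (a : k) x y z, gcirc (a *: x + y) z = a *: gcirc x z + gcirc y z;
  gcirc_linr : forall (a : k) x y z, gcirc z (a *: x + y) = a *: gcirc z x + gcirc z y;
  gcirc_lsym : forall x y z,
    gcirc x (gcirc y z) - gcirc (gcirc x y) z = gcirc y (gcirc x z) - gcirc (gcirc y x) z;
  gcirc_rcomm : forall x y z, gcirc (gcirc x y) z = gcirc (gcirc x z) y;
  gcompat1 : forall x y z, gcirc (gmul x y) z = gmul x (gcirc y z);
  gcompat2 : forall x y z,
    gmul (gcirc x y) z - gcirc x (gmul y z) = gmul (gcirc y x) z - gcirc y (gmul x z)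
}.

Definition GDNP_hom (k : fieldType) (A B : GDNPAlg k) (f : A -> B) : Prop :=
  (forall (a : k) x y, f (a *: x + y) = a *: f x + f y) /\
  (forall x y, f (gmul x y) = gmul (f x) (f y)) /\
  f (gone A) = gone B /\
  (forall x y, f (gcirc x y) = gcirc (f x) (f y)).

Definition GDNP_ideal (k : fieldType) (A : GDNPAlg k) (I : A -> Prop) : Prop :=
  I 0 /\
  (forall (a : k) x y, I x -> I y -> I (a *: x + y)) /\
  (forall x y, I y -> I (gmul x y)) /\
  (forall x y, I y -> I (gcirc x y)) /\
  (forall x y, I x -> I (gcirc x y)).

Definition GDNP_Id (k : fieldType) (A : GDNPAlg k) (S : A -> Prop) (x : A) : Prop :=
  forall I : A -> Prop, GDNP_ideal I -> (forall s, S s -> I s) -> I x.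

(* (Q, pi) is (a model of) the quotient A / Id(S): a surjective homomorphism
   whose kernel is exactly Id(S). *)
Definition is_GDNP_quotient (k : fieldType) (A : GDNPAlg k) (S : A -> Prop)
    (Q : GDNPAlg k) (pi : A -> Q) : Prop :=
  GDNP_hom pi /\ (forall q, exists x, pi x = q) /\
  (forall x, pi x = 0 <-> GDNP_Id S x).

Definition is_free_GDNP (k : fieldType) (X : Type) (F : GDNPAlg k) (iota : X -> F) : Prop :=
  forall (B : GDNPAlg k) (f : X -> B),
    exists phi : F -> B, GDNP_hom phi /\ (forall a, phi (iota a) = f a) /\
      (forall psi : F -> B, GDNP_hom psi -> (forall a, psi (iota a) = f a) ->
         forall x, psi x = phi x).

Definition lozenge (k : fieldType) (A : GDNPAlg k) (w : A) : Prop :=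
  exists x y z, w = gcirc x (gmul y z) - gmul (gcirc x y) z - gmul (gcirc x z) y.

Record DiffAlg (k : fieldType) := {
  dcar :> lmodType k;
  dmul : dcar -> dcar -> dcar;
  done : dcar;
  dD : dcar -> dcar;
  dmul_linl : forall (a : k) x y z, dmul (a *: x + y) z = a *: dmul x z + dmul y z;
  dmul_linr : forall (a : k) x y z, dmul z (a *: x + y) = a *: dmul z x + dmul z y;
  dmulC : forall x y, dmul x y = dmul y x;
  dmulA : forall x y z, dmul x (dmul y z) = dmul (dmul x y) z;
  dmul1 : forall x, dmul done x = x;
  dD_lin : forall (a : k) x y, dD (a *: x + y) = a *: dD x + dD y;
  dD_leibniz : forall x y, dD (dmul x y) = dmul (dD x) y + dmul x (dD y)
}.

Definition Diff_hom (k : fieldType) (A B : DiffAlg k) (f : A -> B) : Prop :=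
  (forall (a : k) x y, f (a *: x + y) = a *: f x + f y) /\
  (forall x y, f (dmul x y) = dmul (f x) (f y)) /\
  f (done A) = done B /\
  (forall x, f (dD x) = dD (f x)).

Definition Diff_ideal (k : fieldType) (A : DiffAlg k) (I : A -> Prop) : Prop :=
  I 0 /\
  (forall (a : k) x y, I x -> I y -> I (a *: x + y)) /\
  (forall x y, I y -> I (dmul x y)) /\
  (forall x, I x -> I (dD x)).

Definition Diff_Id (k : fieldType) (A : DiffAlg k) (R : A -> Prop) (x : A) : Prop :=
  forall I : A -> Prop, Diff_ideal I -> (forall r, R r -> I r) -> I x.

(* (L, rho) is (a model of) k{X|R} = A / (differential ideal generated by R) *)
Definition is_Diff_quotient (k : fieldType) (A : DiffAlg k) (R : A -> Prop)
    (L : DiffAlg k) (rho : A -> L) : Prop :=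
  Diff_hom rho /\ (forall q, exists x, rho x = q) /\
  (forall x, rho x = 0 <-> Diff_Id R x).

Definition is_free_Diff (k : fieldType) (X : Type) (K : DiffAlg k) (iota : X -> K) : Prop :=
  forall (B : DiffAlg k) (f : X -> B),
    exists phi : K -> B, Diff_hom phi /\ (forall a, phi (iota a) = f a) /\
      (forall psi : K -> B, Diff_hom psi -> (forall a, psi (iota a) = f a) ->
         forall x, psi x = phi x).

Definition GDNP_to_Diff_hom (k : fieldType) (A : GDNPAlg k) (K : DiffAlg k) (f : A -> K) : Prop :=
  (forall (a : k) x y, f (a *: x + y) = a *: f x + f y) /\
  (forall x y, f (gmul x y) = dmul (f x) (f y)) /\
  f (gone A) = done K /\
  (forall x y, f (gcirc x y) = dmul (f x) (dD (f y))).

Definition GDNP_Diff_iso (k : fieldType) (Q : GDNPAlg k) (L : DiffAlg k) (phi : Q -> L) : Prop :=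
  bijective phi /\
  GDNP_to_Diff_hom phi /\
  (forall x, phi (gcirc (gone Q) x) = dD (phi x)).

(* A commutative differential algebra becomes a GDN-Poisson algebra under
   f o g = f Dg, and it satisfies x o (y z) = (x o y) z + (x o z) y because D is
   a derivation; this gives theta.  Conversely a GDN-Poisson algebra Q satisfying
   that identity is a differential algebra for D x = e o x, and in any GDN-Poisson
   algebra x o y = x (e o y), so the two structures on Q determine each other.
   Hence the GDN-Poisson map GDNP(X|S) -> k{X|theta(S)} induced by theta and the
   differential map k{X|theta(S)} -> GDNP(X|S) induced by a |-> a are inverse to
   each other: both composites fix the generators, so freeness forces them to be
   the identity. *)
From mathcomp Require Import all_boot all_order all_algebra.
From Stdlib Require Import ClassicalEpsilon.
Set Implicit Arguments. Unset Strict Implicit. Unset Printing Implicit Defensive.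
Import GRing.Theory.
Local Open Scope ring_scope.

Section LinearMaps.
Variables (k : fieldType) (U V : lmodType k) (f : U -> V).
Hypothesis f_lin : forall (a : k) x y, f (a *: x + y) = a *: f x + f y.

Lemma linD x y : f (x + y) = f x + f y.
Proof. by have := f_lin 1 x y; rewrite !scale1r. Qed.

Lemma lin0 : f 0 = 0.
Proof. by apply/(@addrI _ (f 0)); rewrite -linD !addr0. Qed.

Lemma linB x y : f (x - y) = f x - f y.
Proof. by have := f_lin (-1) y x; rewrite !scaleN1r addrC => ->; rewrite addrC. Qed.
End LinearMaps.

Lemma factor_through_surj (k : fieldType) (U V W : lmodType k) (f : U -> V)
    (f_lin : forall (a : k) x y, f (a *: x + y) = a *: f x + f y) (proj : U -> W)
    (proj_lin : forall (a : k) x y, proj (a *: x + y) = a *: proj x + proj y)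
    (proj_surj : forall w, exists x, proj x = w)
    (ker_proj_f : forall x, proj x = 0 -> f x = 0) :
  exists g : W -> V, forall x, g (proj x) = f x.
Proof.
exists (fun w => f (proj1_sig (constructive_indefinite_description _ (proj_surj w)))).
move=> x; case: constructive_indefinite_description => /= y proj_y.
apply/eqP; rewrite -subr_eq0 -(linB f_lin); apply/eqP/ker_proj_f.
by rewrite (linB proj_lin) proj_y subrr.
Qed.

Section DiffAlgTheory.
Variables (k : fieldType) (K : DiffAlg k).
Local Notation m := (@dmul k K).
Local Notation D := (@dD k K).

Lemma dmulDr z x y : m z (x + y) = m z x + m z y.
Proof. exact: (linD (fun a x y => dmul_linr a x y z)). Qed.

Lemma dmul0r z : m 0 z = 0.
Proof. exact: (lin0 (fun a x y => dmul_linl a x y z)). Qed.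

Lemma dmulr0 z : m z 0 = 0.
Proof. exact: (lin0 (fun a x y => dmul_linr a x y z)). Qed.

Lemma dD0 : D 0 = 0.
Proof. exact: (lin0 (@dD_lin k K)). Qed.

Lemma dmulCA x y z : m x (m y z) = m y (m x z).
Proof. by rewrite dmulA (dmulC x y) -dmulA. Qed.

Definition dcirc (x y : K) := m x (D y).

Lemma dcirc_linl a x y z : dcirc (a *: x + y) z = a *: dcirc x z + dcirc y z.
Proof. exact: dmul_linl. Qed.

Lemma dcirc_linr a x y z : dcirc z (a *: x + y) = a *: dcirc z x + dcirc z y.
Proof. by rewrite /dcirc dD_lin dmul_linr. Qed.

Lemma dcirc_lsym x y z :
  dcirc x (dcirc y z) - dcirc (dcirc x y) z = dcirc y (dcirc x z) - dcirc (dcirc y x) z.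
Proof.
rewrite /dcirc !dD_leibniz !dmulDr -!dmulA addrAC subrr add0r addrAC subrr add0r.
exact: dmulCA.
Qed.

Lemma dcirc_rcomm x y z : dcirc (dcirc x y) z = dcirc (dcirc x z) y.
Proof. by rewrite /dcirc -!dmulA (dmulC (D y)). Qed.

Lemma dcirc_compat1 x y z : dcirc (m x y) z = m x (dcirc y z).
Proof. by rewrite /dcirc dmulA. Qed.

Lemma dcirc_compat2 x y z :
  m (dcirc x y) z - dcirc x (m y z) = m (dcirc y x) z - dcirc y (m x z).
Proof.
rewrite /dcirc !dD_leibniz !dmulDr -!dmulA (dmulC (D y) z) (dmulC (D x) z).
by rewrite !opprD !addrA !subrr !add0r (dmulCA x).
Qed.

Lemma dcirc_dmul x y z : dcirc x (m y z) = m (dcirc x y) z + m (dcirc x z) y.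
Proof. by rewrite /dcirc dD_leibniz dmulDr -!dmulA (dmulC (D z)) addrC. Qed.

Definition gdnp_of_diff : GDNPAlg k :=
  Build_GDNPAlg (@dmul_linl k K) (@dmul_linr k K) (@dmulC k K) (@dmulA k K)
    (@dmul1 k K) dcirc_linl dcirc_linr dcirc_lsym dcirc_rcomm dcirc_compat1
    dcirc_compat2.
End DiffAlgTheory.

Section GDNPTheory.
Variables (k : fieldType) (A : GDNPAlg k).
Local Notation m := (@gmul k A).
Local Notation c := (@gcirc k A).

Lemma gmulr0 x : m x 0 = 0.
Proof. exact: (lin0 (fun a y z => gmul_linr a y z x)). Qed.

Lemma gcirc0r y : c 0 y = 0.
Proof. exact: (lin0 (fun a x z => gcirc_linl a x z y)). Qed.

Lemma gcircr0 x : c x 0 = 0.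
Proof. exact: (lin0 (fun a y z => gcirc_linr a y z x)). Qed.

Lemma gcircE x y : c x y = m x (c (gone A) y).
Proof. by rewrite -gcompat1 gmulC gmul1. Qed.

Hypothesis gcirc_gmul : forall x y z, c x (m y z) = m (c x y) z + m (c x z) y.

Definition gdnp_der (x : A) := c (gone A) x.

Lemma gdnp_der_lin a x y : gdnp_der (a *: x + y) = a *: gdnp_der x + gdnp_der y.
Proof. exact: gcirc_linr. Qed.

Lemma gdnp_der_leibniz x y : gdnp_der (m x y) = m (gdnp_der x) y + m x (gdnp_der y).
Proof. by rewrite /gdnp_der gcirc_gmul (gmulC x). Qed.

Definition diff_of_gdnp : DiffAlg k :=
  Build_DiffAlg (@gmul_linl k A) (@gmul_linr k A) (@gmulC k A) (@gmulA k A)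
    (@gmul1 k A) gdnp_der_lin gdnp_der_leibniz.
End GDNPTheory.

Section Homomorphisms.
Variable k : fieldType.

Lemma GDNP_hom_comp (A B C : GDNPAlg k) (f : A -> B) (g : B -> C) :
  GDNP_hom f -> GDNP_hom g -> GDNP_hom (g \o f).
Proof.
move=> [fl [fm [f1 fc]]] [gl [gm [g1 gc]]].
split; first by move=> a x y /=; rewrite fl gl.
split; first by move=> x y /=; rewrite fm gm.
by split=> [/=|x y /=]; rewrite ?f1 ?g1 // fc gc.
Qed.

Lemma Diff_hom_comp (A B C : DiffAlg k) (f : A -> B) (g : B -> C) :
  Diff_hom f -> Diff_hom g -> Diff_hom (g \o f).
Proof.
move=> [fl [fm [f1 fD]]] [gl [gm [g1 gD]]].
split; first by move=> a x y /=; rewrite fl gl.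
split; first by move=> x y /=; rewrite fm gm.
by split=> [/=|x /=]; rewrite ?f1 ?g1 // fD gD.
Qed.

Lemma gdnp_of_diff_hom (K L : DiffAlg k) (f : K -> L) :
  Diff_hom f -> @GDNP_hom k (gdnp_of_diff K) (gdnp_of_diff L) f.
Proof.
move=> [fl [fm [f1 fD]]]; split; [exact: fl | split; [exact: fm | split=> [|x y]]].
  exact: f1.
by rewrite /= /dcirc fm fD.
Qed.

Lemma diff_of_gdnp_homl (Q : GDNPAlg k) hyp (L : DiffAlg k) (f : Q -> L) :
  @GDNP_hom k Q (gdnp_of_diff L) f -> @Diff_hom k (diff_of_gdnp hyp) L f.
Proof.
move=> [fl [fm [f1 fc]]]; split; [exact: fl | split; [exact: fm | split=> [|x]]].
  exact: f1.
by rewrite /= /gdnp_der fc f1 /= /dcirc dmul1.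
Qed.

Lemma diff_of_gdnp_homr (Q : GDNPAlg k) hyp (K : DiffAlg k) (f : K -> Q) :
  @Diff_hom k K (diff_of_gdnp hyp) f -> @GDNP_hom k (gdnp_of_diff K) Q f.
Proof.
move=> [fl [fm [f1 fD]]]; split; [exact: fl | split; [exact: fm | split=> [|x y]]].
  exact: f1.
by rewrite /= /dcirc fm fD /= /gdnp_der -gcircE.
Qed.

Lemma GDNP_hom_kills_lozenge (F : GDNPAlg k) (K : DiffAlg k) (f : F -> K) :
  @GDNP_hom k F (gdnp_of_diff K) f -> forall w, lozenge w -> f w = 0.
Proof.
move=> [fl [fm [_ fc]]] _ [x [y [z ->]]].
rewrite !(linB fl) !fc !fm !fc /= dcirc_dmul.
by rewrite -addrA -opprD subrr.
Qed.

Lemma GDNP_hom_Id_kernel (A B : GDNPAlg k) (f : A -> B) (S : A -> Prop) :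
  GDNP_hom f -> (forall s, S s -> f s = 0) -> forall x, GDNP_Id S x -> f x = 0.
Proof.
move=> [fl [fm [_ fc]]] fS x /(_ (fun x => f x = 0)); apply=> //.
split; first exact: (lin0 fl).
split; first by move=> a y z fy fz; rewrite fl fy fz scaler0 addr0.
split; first by move=> y z fz; rewrite fm fz gmulr0.
by split=> y z fyz; rewrite fc fyz ?gcircr0 ?gcirc0r.
Qed.

Lemma Diff_hom_Id_kernel (A B : DiffAlg k) (f : A -> B) (R : A -> Prop) :
  Diff_hom f -> (forall r, R r -> f r = 0) -> forall x, Diff_Id R x -> f x = 0.
Proof.
move=> [fl [fm [_ fD]]] fR x /(_ (fun x => f x = 0)); apply=> //.
split; first exact: (lin0 fl).
split; first by move=> a y z fy fz; rewrite fl fy fz scaler0 addr0.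
by split=> [y z fz | y fy]; rewrite ?fm ?fD ?fz ?fy ?dmulr0 ?dD0.
Qed.

Lemma GDNP_quotient_lift (A B Q : GDNPAlg k) (S : A -> Prop) (proj : A -> Q)
    (f : A -> B) :
  is_GDNP_quotient S proj -> GDNP_hom f -> (forall s, S s -> f s = 0) ->
  exists g : Q -> B, GDNP_hom g /\ forall x, g (proj x) = f x.
Proof.
move=> [[pl [pm [p1 pc]]] [surj ker]] f_hom fS.
have ker_f x : proj x = 0 -> f x = 0 by move/ker; exact: GDNP_hom_Id_kernel.
have [fl [fm [f1 fc]]] := f_hom.
have [g g_proj] := factor_through_surj fl pl surj ker_f.
exists g; split=> //; split; [|split; [|split]].
- by move=> a x y; have [x' <-] := surj x; have [y' <-] := surj y; rewrite -pl !g_proj.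
- by move=> x y; have [x' <-] := surj x; have [y' <-] := surj y; rewrite -pm !g_proj.
- by rewrite -p1 g_proj.
- by move=> x y; have [x' <-] := surj x; have [y' <-] := surj y; rewrite -pc !g_proj.
Qed.

Lemma Diff_quotient_lift (A B L : DiffAlg k) (R : A -> Prop) (rho : A -> L)
    (f : A -> B) :
  is_Diff_quotient R rho -> Diff_hom f -> (forall r, R r -> f r = 0) ->
  exists g : L -> B, forall x, g (rho x) = f x.
Proof.
move=> [[rl _] [surj ker]] f_hom fR.
apply: (factor_through_surj f_hom.1 rl surj) => x /ker.
exact: Diff_hom_Id_kernel.
Qed.

Lemma free_GDNP_hom_ext (X : Type) (F : GDNPAlg k) (iota : X -> F)
    (B : GDNPAlg k) (f g : F -> B) :
  is_free_GDNP iota -> GDNP_hom f -> GDNP_hom g ->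
  (forall a, f (iota a) = g (iota a)) -> f =1 g.
Proof.
move=> /(_ B (g \o iota)) [? [_ [_ uniq]]] f_hom g_hom fg x.
by rewrite (uniq f) // (uniq g).
Qed.

Lemma free_Diff_hom_ext (X : Type) (K : DiffAlg k) (iota : X -> K)
    (B : DiffAlg k) (f g : K -> B) :
  is_free_Diff iota -> Diff_hom f -> Diff_hom g ->
  (forall a, f (iota a) = g (iota a)) -> f =1 g.
Proof.
move=> /(_ B (g \o iota)) [? [_ [_ uniq]]] f_hom g_hom fg x.
by rewrite (uniq f) // (uniq g).
Qed.
End Homomorphisms.

Lemma lozenge_quotient_to_diff (k : fieldType) (X : Type) (F : GDNPAlg k)
    (iota : X -> F) (DG : GDNPAlg k) (piD : F -> DG) (K : DiffAlg k) (f : X -> K) :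
  is_free_GDNP iota -> is_GDNP_quotient (@lozenge k F) piD ->
  exists theta : DG -> K, GDNP_to_Diff_hom theta /\
    forall a, theta (piD (iota a)) = f a.
Proof.
move=> /(_ (gdnp_of_diff K) f) [phi [phi_hom [phi_iota _]]] quotD.
have [theta [theta_hom theta_piD]] :=
  GDNP_quotient_lift quotD phi_hom (GDNP_hom_kills_lozenge phi_hom).
by exists theta; split=> // a; rewrite theta_piD phi_iota.
Qed.

Theorem mainTheorem7
  (k : fieldType) (X : Type) (ltX : X -> X -> Prop) (wo : is_well_order ltX)
  (F : GDNPAlg k) (iota : X -> F) (freeF : is_free_GDNP iota)
  (S : F -> Prop)
  (Q : GDNPAlg k) (piQ : F -> Q) (quotQ : is_GDNP_quotient S piQ)
  (hyp : forall x y z : Q,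
     gcirc x (gmul y z) = gmul (gcirc x y) z + gmul (gcirc x z) y)
  (DG : GDNPAlg k) (piD : F -> DG) (quotD : is_GDNP_quotient (@lozenge k F) piD)
  (K : DiffAlg k) (iotaK : X -> K) (freeK : is_free_Diff iotaK) :
  (exists theta : DG -> K, GDNP_to_Diff_hom theta /\
      forall a, theta (piD (iota a)) = iotaK a) /\
  (forall theta : DG -> K, GDNP_to_Diff_hom theta ->
     (forall a, theta (piD (iota a)) = iotaK a) ->
     forall (L : DiffAlg k) (rho : K -> L),
       is_Diff_quotient (fun r => exists s, S s /\ r = theta (piD s)) rho ->
       exists phi : Q -> L, GDNP_Diff_iso phi).
Proof.
split; first exact: lozenge_quotient_to_diff.
move=> theta theta_hom theta_iota L rho quotL.
have [[rho_hom [rho_surj rho_ker]] piD_hom] := (quotL, quotD.1).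
have rho_S s : S s -> rho (theta (piD s)) = 0.
  by move=> Ss; apply/rho_ker => I _; apply; exists s.
have theta_piD_hom : @GDNP_hom k F (gdnp_of_diff K) (theta \o piD).
  by apply: GDNP_hom_comp piD_hom _; exact: theta_hom.
have h_hom := GDNP_hom_comp theta_piD_hom (gdnp_of_diff_hom rho_hom).
have [phi [phi_hom phi_piQ]] := GDNP_quotient_lift quotQ h_hom rho_S.
have [psi [psi_hom [psi_iota _]]] := freeK (diff_of_gdnp hyp) (piQ \o iota).
have psi_theta_piD x : psi (theta (piD x)) = piQ x.
  apply: (free_GDNP_hom_ext (f := psi \o theta \o piD) freeF) => [||a].
  - exact: GDNP_hom_comp theta_piD_hom (diff_of_gdnp_homr psi_hom).
  - exact: quotQ.1.
  - by rewrite /= theta_iota psi_iota.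
have [g g_rho] : exists g : L -> Q, forall y, g (rho y) = psi y.
  apply: (Diff_quotient_lift quotL psi_hom) => _ [s [Ss ->]].
  by rewrite psi_theta_piD; apply/quotQ.2.2 => I _; apply.
have phi_psi y : phi (psi y) = rho y.
  apply: (free_Diff_hom_ext (f := phi \o psi) freeK) => [||a].
  - exact: Diff_hom_comp psi_hom (diff_of_gdnp_homl hyp phi_hom).
  - exact: rho_hom.
  - by rewrite /= psi_iota phi_piQ /= theta_iota.
exists phi; split; [exists g => [q | l] | split].
- by have [x <-] := quotQ.2.1 q; rewrite phi_piQ /= g_rho psi_theta_piD.
- by have [y <-] := rho_surj l; rewrite g_rho phi_psi.
- exact: phi_hom.
- exact: (diff_of_gdnp_homl hyp phi_hom).2.2.2.
Qed.
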